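(* A curve $u\in C^1(\mathbb{R}/\mathbb{Z},\mathbb{R}^n)$ is injective and regular (i.e. $\min_{\mathbb{R}/\mathbb{Z}}|u'|>0$) if and only if $\mathrm{bil}(u)<\infty$. Moreover, if $\mathrm{bil}(u)<\infty$, then $\mathrm{bil}(\tilde u)\le2\,\mathrm{bil}(u)$ for every $\tilde u\in C^1(\mathbb{R}/\mathbb{Z},\mathbb{R}^n)$ with \[\|(\tilde u-u)'\|_{L^\infty}\le\frac1{2\,\mathrm{bil}(u)}.\]
   Context: $\mathrm{bil}(u)=\sup_{x,y\in\mathbb{R}/\mathbb{Z},\,x\ne y}\frac{|x-y|}{|u(x)-u(y)|}$, where $|x-y|=\min_{k\in\mathbb{Z}}|x-y-k|$ is the distance in $\mathbb{R}/\mathbb{Z}$. *)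

From HB Require Import structures.
From mathcomp Require Import all_boot all_order all_algebra.
From mathcomp Require Import all_classical all_reals all_analysis.
Set Implicit Arguments. Unset Strict Implicit. Unset Printing Implicit Defensive.
Import Order.TTheory GRing.Theory Num.Theory.
Import numFieldNormedType.Exports.
Local Open Scope classical_set_scope.
Local Open Scope ring_scope.

(* Euclidean norm on R^n (the library norm on 'rV is the max norm). *)
Definition enorm {R : realType} {n : nat} (v : 'rV[R]_n) : R :=
  Num.sqrt (\sum_(i < n) v ord0 i ^+ 2).

(* distance in R/Z between the classes of x and y: min_k |x - y - k| *)
Definition circ_dist {R : realType} (x y : R) : R :=
  inf (range (fun k : int => `|x - y - k%:~R|)).

(* u is a C^1 map R/Z -> R^n, i.e. a 1-periodic C^1 map R -> R^n *)
Definition C1_periodic {R : realType} {n : nat} (u : R -> 'rV[R]_n) : Prop :=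
  (forall x, u (x + 1) = u x) /\
  (forall x, derivable u x 1) /\
  continuous (fun x => 'D_1 u x).

Definition circ_injective {R : realType} {n : nat} (u : R -> 'rV[R]_n) : Prop :=
  forall x y : R, circ_dist x y != 0 -> u x != u y.

(* regular: |u'| > 0 everywhere (min over the compact R/Z is positive) *)
Definition regular {R : realType} {n : nat} (u : R -> 'rV[R]_n) : Prop :=
  forall x : R, 0 < enorm ('D_1 u x).

Definition bil_ratio {R : realType} {n : nat} (u : R -> 'rV[R]_n) (x y : R)
  : \bar R :=
  if u x == u y then +oo%E else (circ_dist x y / enorm (u x - u y))%:E.

Definition bil {R : realType} {n : nat} (u : R -> 'rV[R]_n) : \bar R :=
  ereal_sup [set r | exists x y : R, circ_dist x y != 0 /\ r = bil_ratio u x y].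

From HB Require Import structures.
From mathcomp Require Import all_boot all_order all_algebra.
From mathcomp Require Import all_classical all_reals all_analysis.
From mathcomp Require Import ring lra.
Import Order.TTheory GRing.Theory Num.Theory.
Import numFieldNormedType.Exports.
Local Open Scope classical_set_scope.
Local Open Scope ring_scope.

(* If u is injective and regular, the difference quotient
   (x, h) |-> |u(x + h) - u(x)| / |h|, extended by |u'(x)| at h = 0, is
   continuous (near h = 0 by the mean value inequality) and positive on the
   compact set [0, 1] x [-1/2, 1/2]. Every pair of points of R/Z is represented
   by x in [0, 1] and x + h with |h| = |x - y|_{R/Z} <= 1/2, so the minimum
   m > 0 gives bil(u) <= 1/m. Conversely, if bil(u) = B is finite then u is
   injective, and letting h -> 0 in |h| <= B |u(x + h) - u(x)| gives
   |u'(x)| >= 1/B. For the perturbation, the mean value inequality for ut - u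
   between nearest representatives gives |(ut - u)(x) - (ut - u)(y)| <= |x - y|/(2B),
   hence |ut(x) - ut(y)| >= |x - y|/B - |x - y|/(2B). *)

Section EuclideanNorm.
Context {R : realType} {n : nat}.
Implicit Types a b v : 'rV[R]_n.

Definition edot a b : R := \sum_(i < n) a ord0 i * b ord0 i.

Lemma enorm_ge0 v : 0 <= enorm v.
Proof. exact: sqrtr_ge0. Qed.

Lemma sqr_enorm v : enorm v ^+ 2 = \sum_(i < n) v ord0 i ^+ 2.
Proof. by rewrite sqr_sqrtr // sumr_ge0 // => i _; rewrite sqr_ge0. Qed.

Lemma enorm_eq0 v : (enorm v == 0) = (v == 0).
Proof.
apply/eqP/eqP => [v0|->]; last first.
  by rewrite /enorm big1 ?sqrtr0 // => i _; rewrite mxE expr0n.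
have sum0 : \sum_(i < n) v ord0 i ^+ 2 = 0 by rewrite -sqr_enorm v0 expr0n.
apply/matrixP => i j; rewrite (ord1 i) mxE; apply/eqP; rewrite -sqrf_eq0; apply/eqP.
by apply: (psumr_eq0P _ sum0) => // k _; rewrite sqr_ge0.
Qed.

Lemma enorm_gt0 v : (0 < enorm v) = (v != 0).
Proof. by rewrite lt_def enorm_ge0 andbT enorm_eq0. Qed.

Lemma enorm0 : enorm (0 : 'rV[R]_n) = 0.
Proof. by apply/eqP; rewrite enorm_eq0. Qed.

(* Lagrange's identity: sum_i (a_i B - S b_i)^2 = B (A B - S^2),
   with A = |a|^2, B = |b|^2 and S = <a, b>. *)
Lemma sqr_edot_le a b : edot a b ^+ 2 <= enorm a ^+ 2 * enorm b ^+ 2.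
Proof.
rewrite !sqr_enorm /edot.
set A := \sum_(i < n) _ ^+ 2; set B := \sum_(i < n) b ord0 i ^+ 2.
set S := \sum_(i < n) _.
have B0 : 0 <= B by rewrite sumr_ge0 // => i _; rewrite sqr_ge0.
have [Bz|Bn0] := eqVneq B 0.
  have b0 i : b ord0 i = 0.
    apply/eqP; rewrite -sqrf_eq0; apply/eqP.
    by apply: (psumr_eq0P _ Bz) => // j _; rewrite sqr_ge0.
  by rewrite /S big1 ?expr0n ?Bz ?mulr0 // => i _; rewrite b0 mulr0.
have lagrange : \sum_(i < n) (a ord0 i * B - S * b ord0 i) ^+ 2 = B * (A * B - S ^+ 2).
  transitivity (\sum_(i < n) (a ord0 i ^+ 2 * B ^+ 2
      - (a ord0 i * b ord0 i) * (2 * B * S) + b ord0 i ^+ 2 * S ^+ 2)).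
    by apply: eq_bigr => i _; ring.
  rewrite big_split sumrB -!mulr_suml -/A -/B -/S /=; clearbody A B S; ring.
have : 0 <= B * (A * B - S ^+ 2).
  by rewrite -lagrange sumr_ge0 // => i _; rewrite sqr_ge0.
by rewrite pmulr_rge0 ?subr_ge0 // lt_def Bn0 B0.
Qed.

Lemma edot_le a b : edot a b <= enorm a * enorm b.
Proof.
apply: le_trans (ler_norm _) _.
rewrite -[leRHS]ger0_norm ?mulr_ge0 ?enorm_ge0 //.
by rewrite -!sqrtr_sqr ler_sqrt ?sqr_ge0 // exprMn sqr_edot_le.
Qed.

Lemma ler_enormD a b : enorm (a + b) <= enorm a + enorm b.
Proof.
rewrite -[leRHS]ger0_norm ?addr_ge0 ?enorm_ge0 // -sqrtr_sqr ler_sqrt ?sqr_ge0 //.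
have -> : \sum_(i < n) (a + b) ord0 i ^+ 2 = enorm a ^+ 2 + 2 * edot a b + enorm b ^+ 2.
  rewrite !sqr_enorm /edot mulr_sumr -!big_split /=.
  by apply: eq_bigr => i _; rewrite mxE; ring.
have := edot_le a b; nra.
Qed.

Lemma enormZ (c : R) v : enorm (c *: v) = `|c| * enorm v.
Proof.
rewrite /enorm -sqrtr_sqr -sqrtrM ?sqr_ge0 // mulr_sumr.
by congr Num.sqrt; apply: eq_bigr => i _; rewrite mxE exprMn.
Qed.

Lemma enormN v : enorm (- v) = enorm v.
Proof. by rewrite -scaleN1r enormZ normrN1 mul1r. Qed.

Lemma enorm_distC a b : enorm (a - b) = enorm (b - a).
Proof. by rewrite -enormN opprB. Qed.

Lemma ler_enorm_dist a b : `|enorm a - enorm b| <= enorm (a - b).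
Proof.
have lerB (x y : 'rV[R]_n) : enorm x - enorm y <= enorm (x - y).
  by have := ler_enormD (x - y) y; rewrite subrK; lra.
by rewrite ler_norml lerB lerNl opprB enorm_distC lerB.
Qed.

Lemma enorm_continuous : continuous (@enorm R n).
Proof.
move=> v; apply: continuous_comp; last exact: sqrt_continuous.
apply: (continuous_big add_continuous (F := fun i (w : 'rV[R]_n) => w ord0 i ^+ 2)).
move=> i _ w.
exact: (continuous_comp (@coord_continuous R 1 n ord0 i w) (@exprn_continuous R 2 _)).
Qed.

End EuclideanNorm.

Section CircleDistance.
Context {R : realType}.
Implicit Types x y h : R.

Lemma circ_dist_le x y (j : int) : circ_dist x y <= `|x - y - j%:~R|.
Proof. by apply: ge_inf; [exists 0 => _ [k _ <-] | exists j]. Qed.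

Lemma circ_dist_ge x y c : (forall j : int, c <= `|x - y - j%:~R|) -> c <= circ_dist x y.
Proof.
move=> lb; apply: lb_le_inf; first by exists `|x - y - 0%:~R|, 0.
by move=> _ [j _ <-].
Qed.

Lemma circ_dist_ge0 x y : 0 <= circ_dist x y.
Proof. exact: circ_dist_ge. Qed.

Lemma circ_dist_nearest x y :
  exists k : int, circ_dist x y = `|x - y - k%:~R| /\ `|x - y - k%:~R| <= 2^-1.
Proof.
set d := x - y; have fl := floor_le d; have lt_fl := floorD1_gt d.
set f := Num.floor d in fl lt_fl *.
set m := Num.min (d - f%:~R) ((f + 1)%:~R - d).
have m_le j : m <= `|d - j%:~R|.
  have [jf|fj] := lerP j f.
    have jf' : j%:~R <= f%:~R :> R by rewrite ler_int.
    by rewrite ge_min ger0_norm; [apply/orP; left|]; lra.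
  have fj' : (f + 1)%:~R <= j%:~R :> R by rewrite ler_int lezD1.
  by rewrite ge_min ler0_norm; [apply/orP; right|]; lra.
suff [k [km kh]] : exists k : int, `|d - k%:~R| = m /\ `|d - k%:~R| <= 2^-1.
  by exists k; split => //; apply/le_anti; rewrite circ_dist_le km circ_dist_ge.
rewrite /m intrD in lt_fl *.
have [c|c] := lerP (d - f%:~R) (f%:~R + 1 - d).
  by exists f; rewrite ger0_norm ?subr_ge0 //; split => //; lra.
exists (f + 1); rewrite intrD ler0_norm; last lra.
by rewrite opprB; split => //; lra.
Qed.

Lemma circ_dist_small x h : `|h| <= 2^-1 -> circ_dist (x + h) x = `|h|.
Proof.
move=> h_small; have xh : x + h - x = h by rewrite addrAC subrr add0r.
apply/le_anti/andP; split.
  by have := circ_dist_le (x + h) x 0; rewrite subr0 xh.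
apply: circ_dist_ge => j; rewrite xh.
have [->|j0] := eqVneq j 0; first by rewrite subr0.
have j1 : 1 <= `|j%:~R : R| by rewrite -intr_norm ler1z -gtz0_ge1 normr_gt0.
by have := lerB_dist (j%:~R : R) h; rewrite distrC; lra.
Qed.

End CircleDistance.

Lemma periodic_int {R : realType} {T : Type} {u : R -> T} :
  (forall x, u (x + 1) = u x) -> forall (k : int) x, u (x + k%:~R) = u x.
Proof.
move=> u1; have uN1 x : u (x - 1) = u x by rewrite -{2}(subrK 1 x) u1.
have uD (m : nat) x : u (x + m%:R) = u x.
  by elim: m x => [|m IH] x; rewrite ?addr0 // -natr1 addrA u1 IH.
have uB (m : nat) x : u (x - m%:R) = u x.
  by elim: m x => [|m IH] x; rewrite ?subr0 // -natr1 opprD addrA uN1 IH.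
by case=> m x; rewrite ?NegzE ?mulrNz /= ?uD ?uB.
Qed.

Section MeanValue.
Context {R : realType} {n : nat}.
Implicit Types (w dw : R -> 'rV[R]_n) (c : 'rV[R]_n).

Lemma is_derive_coord {w} {t : R} {c} (i : 'I_n) : is_derive t 1 w c ->
  is_derive t 1 (fun s => w s ord0 i) (c ord0 i).
Proof.
move=> wc; have dw : derivable w t 1 by exact: ex_derive.
have <- : 'D_1 w t = c by exact: derive_val.
rewrite (derive_mx dw) mxE.
exact/derivableP/((derivable_mxP w t 1).1 dw ord0 i).
Qed.

Lemma is_derive_scalel c (t : R) : is_derive t 1 ( *:%R^~ c) c.
Proof.
apply: DeriveDef; first exact: diff_derivable.
by rewrite deriveE // diff_val scale1r.
Qed.

(* Test the increment e = w y - w x against itself: the scalar function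
   s |-> <e, w s> satisfies the real mean value theorem. *)
Lemma enorm_mean_value_lt w dw (M x y : R) :
  (forall t : R, is_derive t 1 w (dw t)) -> x < y ->
  (forall t, x < t < y -> enorm (dw t) <= M) ->
  enorm (w y - w x) <= M * (y - x).
Proof.
move=> wdw xy dwM; set e := w y - w x.
have phi_der (t : R) : is_derive t 1 (fun s => edot e (w s)) (edot e (dw t)).
  rewrite /edot -fct_sumE; apply: is_derive_sum => i.
  exact: is_deriveZ (is_derive_coord i (wdw t)).
have phi_cont : {within `[x, y], continuous (fun s => edot e (w s))}.
  by apply: derivable_within_continuous => t _; exact: ex_derive.
have [t /[!in_itv]/= t_in phiE] := MVT xy (fun t _ => phi_der t) phi_cont.
have ee : edot e (w y) - edot e (w x) = enorm e ^+ 2.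
  by rewrite sqr_enorm /edot -sumrB; apply: eq_bigr => i _; rewrite -mulrBr !mxE expr2.
have : enorm e ^+ 2 <= enorm e * (M * (y - x)).
  rewrite -ee phiE mulrA; apply: ler_wpM2r; first by rewrite subr_ge0 ltW.
  by apply: le_trans (edot_le _ _) _; apply: ler_wpM2l; rewrite ?enorm_ge0 ?dwM.
have [->|e0] := eqVneq (enorm e) 0.
  move=> _; apply: mulr_ge0; last by rewrite subr_ge0 ltW.
  exact: le_trans (enorm_ge0 _) (dwM _ t_in).
by rewrite expr2 ler_pM2l // lt_def e0 enorm_ge0.
Qed.

Lemma enorm_mean_value {w dw} {M x y : R} :
  (forall t : R, is_derive t 1 w (dw t)) ->
  (forall t, `|t - x| <= `|y - x| -> enorm (dw t) <= M) ->
  enorm (w y - w x) <= M * `|y - x|.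
Proof.
move=> wdw dwM; have [xy|yx|->] := ltgtP x y.
- rewrite gtr0_norm ?subr_gt0 //; apply: enorm_mean_value_lt => // t /andP[xt ty].
  by apply: dwM; rewrite !gtr0_norm ?subr_gt0 //; lra.
- rewrite enorm_distC distrC gtr0_norm ?subr_gt0 //.
  apply: enorm_mean_value_lt => // t /andP[yt tx].
  by apply: dwM; rewrite !ltr0_norm ?subr_lt0 //; lra.
- by rewrite !subrr normr0 mulr0 enorm0.
Qed.

End MeanValue.

Section BilipschitzConstant.
Context {R : realType} {n : nat}.
Implicit Types (u : R -> 'rV[R]_n) (x y K : R).

Definition bil_bounded u K := forall x y, circ_dist x y <= K * enorm (u x - u y).

Lemma bil_ratio_ge0 u x y : (0 <= bil_ratio u x y)%E.
Proof.
rewrite /bil_ratio; case: ifP => // _.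
by rewrite lee_fin divr_ge0 ?circ_dist_ge0 ?enorm_ge0.
Qed.

Lemma bil_ratio_le_bil u {x y} : circ_dist x y != 0 -> (bil_ratio u x y <= bil u)%E.
Proof. by move=> cd0; apply: ereal_sup_ubound; exists x, y. Qed.

Lemma bil_le {u K} : bil_bounded u K -> (bil u <= K%:E)%E.
Proof.
move=> uK; apply: ub_ereal_sup => _ [x [y [cd0 ->]]].
have cd_gt0 : 0 < circ_dist x y by rewrite lt_def cd0 circ_dist_ge0.
have uxy : 0 < enorm (u x - u y).
  rewrite lt_def enorm_ge0 andbT; move: (uK x y); apply: contraTneq => ->.
  by rewrite mulr0 -ltNge.
rewrite /bil_ratio ifF ?lee_fin ?ler_pdivrMr //.
by apply/negbTE; rewrite -subr_eq0 -enorm_gt0.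
Qed.

Lemma bil_bounded_gt0 {u K} : bil_bounded u K -> 0 < K.
Proof.
move=> uK; have := uK 2^-1 0.
rewrite -[X in circ_dist X]add0r circ_dist_small ger0_norm //.
by have := enorm_ge0 (u 2^-1 - u 0); nra.
Qed.

Lemma bil_finite u : (bil u < +oo)%E ->
  bil u = (fine (bil u))%:E /\ bil_bounded u (fine (bil u)).
Proof.
move=> bil_lt; have bil_ge0 : (0 <= bil u)%E.
  apply: le_trans (bil_ratio_ge0 u 2^-1 0) (bil_ratio_le_bil _ _).
  by rewrite -[X in circ_dist X]add0r circ_dist_small ger0_norm.
have bil_fin : bil u \is a fin_num by rewrite ge0_fin_numE.
split; first by rewrite fineK.
move=> x y; have [->|cd0] := eqVneq (circ_dist x y) 0.
  by rewrite mulr_ge0 ?enorm_ge0 ?fine_ge0.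
have := bil_ratio_le_bil u cd0; rewrite /bil_ratio.
case: eqP => [_|/eqP uxy]; first by rewrite leye_eq => /eqP bil_oo; rewrite bil_oo in bil_lt.
rewrite -(fineK bil_fin) lee_fin ler_pdivrMr //.
by rewrite enorm_gt0 subr_eq0.
Qed.

End BilipschitzConstant.

Section BilBoundedConsequences.
Context {R : realType} {n : nat}.
Implicit Types (u : R -> 'rV[R]_n) (B : R).

Lemma bil_bounded_injective {u B} : bil_bounded u B -> circ_injective u.
Proof.
move=> uB x y cd0; apply: contraTneq (uB x y) => ->.
by rewrite subrr enorm0 mulr0 -ltNge lt_def cd0 circ_dist_ge0.
Qed.

Lemma bil_bounded_enorm_derive {u B x} : derivable u x 1 -> bil_bounded u B ->
  B^-1 <= enorm ('D_1 u x).
Proof.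
move=> dux uB; have B0 := bil_bounded_gt0 uB.
set q := fun h : R => h^-1 *: ((u \o shift x) (h *: 1) - u x).
have q_cvg : enorm (q h) @[h --> 0^'] --> enorm ('D_1 u x).
  have q_D : q h @[h --> 0^'] --> 'D_1 u x := dux.
  exact: cvg_comp q_D (@enorm_continuous R n _).
rewrite -(cvg_lim _ q_cvg) //; apply: limr_ge; first exact: cvgP q_cvg.
near=> h.
have h0 : h != 0 by near: h; exact: nbhs_dnbhs_neq.
have h_small : `|h| < 2^-1 by near: h; apply: dnbhs0_lt.
have := uB (x + h) x; rewrite circ_dist_small ?(ltW h_small) //.
have -> : u (x + h) - u x = h *: q h.
  by rewrite /q scalerA divff // scale1r /= -[h%:A]/(h * 1) mulr1 [h + x]addrC.
rewrite enormZ mulrCA ler_pMr ?normr_gt0 // => qB.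
by rewrite -[B^-1]mulr1 ler_pdivrMl.
Unshelve. all: by end_near. Qed.

Lemma bil_bounded_regular {u B} : (forall x, derivable u x 1) -> bil_bounded u B ->
  regular u.
Proof.
move=> du uB x; apply: lt_le_trans (bil_bounded_enorm_derive (du x) uB).
by rewrite invr_gt0 (bil_bounded_gt0 uB).
Qed.

End BilBoundedConsequences.

Lemma bil_bounded_perturb {R : realType} {n : nat} {u ut : R -> 'rV[R]_n} {B : R} :
  (forall x, u (x + 1) = u x) -> (forall x, ut (x + 1) = ut x) ->
  (forall x, derivable u x 1) -> (forall x, derivable ut x 1) ->
  bil_bounded u B ->
  (forall x, enorm ('D_1 ut x - 'D_1 u x) <= 1 / (2 * B)) ->
  bil_bounded ut (2 * B).
Proof.
move=> u1 ut1 du dut uB dD x y; have B0 := bil_bounded_gt0 uB.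
have [k [cdE _]] := circ_dist_nearest x y.
set y' := y + k%:~R; set c := circ_dist x y.
have cd' : c = `|x - y'| by rewrite /c cdE /y' opprD addrA.
have := uB x y; rewrite -(periodic_int u1 k y) -(periodic_int ut1 k y) -/y' -/c => cu.
have wD (t : R) : is_derive t 1 (ut - u) ('D_1 ut t - 'D_1 u t).
  by apply: is_deriveB; exact: derivableP.
have := enorm_mean_value (x := y') (y := x) wD (fun t _ => dD t); rewrite -cd' => mvi.
have Bmvi : B * enorm ((ut - u) x - (ut - u) y') <= c / 2.
  have -> : c / 2 = B * (1 / (2 * B) * c) by field; rewrite gt_eqF.
  by apply: ler_wpM2l => //; exact: ltW.
have tri : enorm (u x - u y') <= enorm (ut x - ut y') + enorm ((ut - u) x - (ut - u) y').
  have -> : u x - u y' = (ut x - ut y') - ((ut - u) x - (ut - u) y').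
    by apply/matrixP => a b; rewrite !mxE; ring.
  by rewrite -[X in _ <= _ + X]enormN ler_enormD.
have := ler_wpM2l (ltW B0) tri; rewrite mulrDr; lra.
Qed.

Section DifferenceQuotient.
Context {R : realType} {n : nat}.
Variable u : R -> 'rV[R]_n.
Hypothesis du : forall x, derivable u x 1.
Hypothesis Du_cont : continuous (fun x => 'D_1 u x).

Definition diff_quot (q : R * R) : 'rV[R]_n :=
  if q.2 == 0 then 'D_1 u q.1 else q.2^-1 *: (u (q.1 + q.2) - u q.1).

Lemma enorm_diff_quot_cvg0 x0 :
  enorm (diff_quot q) @[q --> (x0, 0)] --> enorm ('D_1 u x0).
Proof.
apply/cvgrPdist_le => e e0.
have : enorm ('D_1 u s - 'D_1 u x0) @[s --> x0] --> enorm ('D_1 u x0 - 'D_1 u x0).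
  have Dc : 'D_1 u s - 'D_1 u x0 @[s --> x0] --> 'D_1 u x0 - 'D_1 u x0.
    by apply: cvgB; [exact: Du_cont | exact: cvg_cst].
  exact: cvg_comp Dc (@enorm_continuous R n _).
rewrite subrr enorm0 => /cvgrPdist_le /(_ e e0) /nbhs_ballP [d d0 Dx0].
have Dnear t x : `|x0 - x| < d / 2 -> `|t - x| < d / 2 ->
    enorm ('D_1 u t - 'D_1 u x0) <= e.
  move=> x0x tx; have := Dx0 t; rewrite -ball_normE /= sub0r normrN (ger0_norm (enorm_ge0 _)).
  by apply; have := ler_distD x x0 t; rewrite [`|x - t|]distrC; lra.
exists (ball x0 (d / 2), ball 0 (d / 2)) => /=.
  by split; apply: nbhsx_ballx; rewrite divr_gt0.
move=> [x h] [/= x0x hd]; rewrite -ball_normE /= in x0x hd.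
rewrite sub0r normrN in hd.
apply: le_trans (ler_enorm_dist _ _) _; rewrite enorm_distC /diff_quot /=.
case: eqP => [_|/eqP h0]; first by apply: Dnear x0x _; rewrite subrr normr0 divr_gt0.
pose w s := u s - s *: 'D_1 u x0.
have wD (t : R) : is_derive t 1 w ('D_1 u t - 'D_1 u x0).
  by apply: is_deriveB; [exact: derivableP | exact: is_derive_scalel].
have -> : h^-1 *: (u (x + h) - u x) - 'D_1 u x0 = h^-1 *: (w (x + h) - w x).
  by apply/matrixP => i j; rewrite /w !mxE; field.
rewrite enormZ normrV ?unitfE // ler_pdivrMl ?normr_gt0 // mulrC.
have := enorm_mean_value (x := x) (y := x + h) wD; rewrite addrAC subrr add0r.
by apply => t tx; apply: Dnear x0x _; lra.
Qed.

Lemma diff_quot_cvg {x0 h0} : h0 != 0 ->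
  diff_quot q @[q --> (x0, h0)] --> diff_quot (x0, h0).
Proof.
move=> h0_neq0; pose dq (q : R * R) := q.2^-1 *: (u (q.1 + q.2) - u q.1).
have u_cont x : {for x, continuous u}.
  exact/differentiable_continuous/derivable1_diffP.
have dq_cvg : dq q @[q --> (x0, h0)] --> dq (x0, h0).
  apply: cvgZ; first by apply: cvgV => //; exact: cvg_snd.
  have u_add : u (q.1 + q.2) @[q --> (x0, h0)] --> u (x0 + h0).
    exact: cvg_comp (add_continuous (x0, h0)) (u_cont _).
  have u_fst : u q.1 @[q --> (x0, h0)] --> u x0.
    exact: cvg_comp (@cvg_fst _ _ (nbhs x0) (nbhs h0) _) (u_cont _).
  exact: cvgB u_add u_fst.
rewrite {2}/diff_quot /= (negbTE h0_neq0); apply: cvg_trans dq_cvg.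
apply: near_eq_cvg; exists (setT, ball h0 `|h0|) => /=.
  by split; [exact: filterT | apply: nbhsx_ballx; rewrite normr_gt0].
move=> [x h] [_ /=]; rewrite -ball_normE /= => hh0.
have h_neq0 : h != 0 by apply: contraTneq hh0 => ->; rewrite subr0 ltxx.
by rewrite /diff_quot /= (negbTE h_neq0).
Qed.

Lemma enorm_diff_quot_continuous : continuous (fun q => enorm (diff_quot q)).
Proof.
move=> [x0 h0]; have [->|h0_neq0] := eqVneq h0 0.
  have dq0 : diff_quot (x0, 0) = 'D_1 u x0 by rewrite /diff_quot /= eqxx.
  by rewrite /continuous_at dq0; exact: enorm_diff_quot_cvg0.
exact: cvg_comp (diff_quot_cvg h0_neq0) (@enorm_continuous R n _).
Qed.

End DifferenceQuotient.

Lemma enorm_diff_quot_gt0 {R : realType} {n : nat} (u : R -> 'rV[R]_n) x h :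
  circ_injective u -> regular u -> `|h| <= 2^-1 -> 0 < enorm (diff_quot u (x, h)).
Proof.
move=> inj reg h_small; rewrite /diff_quot /=; case: eqP => [_|/eqP h0]; first exact: reg.
rewrite enormZ mulr_gt0 ?normr_gt0 ?invr_neq0 // enorm_gt0 subr_eq0.
by apply: inj; rewrite circ_dist_small // normr_eq0.
Qed.

Lemma circ_injective_regular_bil_bounded {R : realType} {n : nat} {u : R -> 'rV[R]_n} :
  C1_periodic u -> circ_injective u -> regular u -> exists K, bil_bounded u K.
Proof.
move=> [u1 [du Du_cont]] inj reg.
pose K := [set` `[0 : R, 1]] `*` [set` `[- 2^-1 : R, 2^-1]].
have K0 : K !=set0.
  by exists (0, 0); rewrite /K /= !in_itv /= lexx ler01 oppr_le0 invr_ge0 ler0n.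
have cK : compact K by apply: compact_setX; exact: segment_compact.
have dq_cont := continuous_subspaceT (enorm_diff_quot_continuous _ du Du_cont) (A := K).
have [[a b] abK dq_min] := compact_EVT_min K0 cK dq_cont.
have /andP[ba bb] : - 2^-1 <= b <= 2^-1 by move: abK; rewrite inE => -[_ /=]; rewrite in_itv.
set m := enorm (diff_quot u (a, b)).
have m0 : 0 < m by apply: enorm_diff_quot_gt0; rewrite // ler_norml ba bb.
exists m^-1 => x y.
have [k [cdE cd_half]] := circ_dist_nearest x y.
set x1 := x - (Num.floor x)%:~R; set h := y + k%:~R - x.
have hE : `|h| = circ_dist x y by rewrite cdE -normrN /h; congr `|_|; ring.
have [h0|h0] := eqVneq h 0.
  by rewrite -hE h0 normr0 mulr_ge0 ?invr_ge0 ?enorm_ge0 ?ltW.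
have x1K : (x1, h) \in K.
  rewrite inE; split; rewrite /= in_itv /=; last by rewrite -ler_norml hE cdE.
  by have := floor_le x; have := floorD1_gt x; rewrite intrD /x1; lra.
have := dq_min _ x1K; rewrite /diff_quot /= (negbTE h0) -/m enormZ normrV ?unitfE //.
have -> : u x1 = u x by rewrite /x1 -mulrNz periodic_int.
have -> : x1 + h = y + k%:~R + (- Num.floor x)%:~R by rewrite /x1 /h intrN; ring.
rewrite !periodic_int // enorm_distC -hE ler_pdivlMl ?normr_gt0 // => mh.
by rewrite ler_pdivlMl // mulrC.
Qed.

Theorem lemma3p6 (R : realType) (n : nat) (u : R -> 'rV[R]_n) :
  C1_periodic u ->
  ((circ_injective u /\ regular u) <-> (bil u < +oo)%E) /\
  ((bil u < +oo)%E ->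
   forall ut : R -> 'rV[R]_n, C1_periodic ut ->
   (forall x : R, enorm ('D_1 ut x - 'D_1 u x) <= 1 / (2 * fine (bil u))) ->
   (bil ut <= 2%:E * bil u)%E).
Proof.
move=> /[dup] Cu [u1 [du _]]; split; first split.
- move=> [inj reg]; have [K uK] := circ_injective_regular_bil_bounded Cu inj reg.
  exact: le_lt_trans (bil_le uK) (ltry _).
- move=> /bil_finite[_ uB].
  by split; [exact: bil_bounded_injective uB | exact: bil_bounded_regular du uB].
- move=> /bil_finite[bilE uB] ut [ut1 [dut _]] dD.
  by rewrite bilE -EFinM; apply: bil_le; exact: bil_bounded_perturb dD.
Qed.
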